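(* Let $\Gamma$ be a finite graph and $S_0\subseteq\mathrm V(\Gamma)$ such that $\Gamma$ is dense with respect to $S_0$. Then the standard double cover of $\Gamma$, with vertex set $\mathrm V(\Gamma)\times\{0,1\}$, is dense with respect to $S_0\times\{0,1\}$.
   Context: The standard double cover of a graph $\Gamma$ is the graph with vertex set $\mathrm V(\Gamma)\times\{0,1\}$ in which $(u,i)$ is adjacent to $(v,j)$ if and only if $u$ is adjacent to $v$ in $\Gamma$ and $i\neq j$. Density: given a graph $\Delta$ and $T_0\subseteq\mathrm V(\Delta)$, start with $T=T_0$; while there is a vertex $x\notin T$ with at least two neighbours in $T$, add $x$ to $T$. If this procedure ends with $T=\mathrm V(\Delta)$, then $\Delta$ is said to be dense with respect to $T_0$. *)

From mathcomp Require Import all_boot.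
Set Implicit Arguments. Unset Strict Implicit. Unset Printing Implicit Defensive.

Definition simple_graph (V : finType) (e : rel V) : Prop :=
  symmetric e /\ irreflexive e.

Definition nbrs_in (V : finType) (e : rel V) (T : {set V}) (x : V) : nat :=
  #|[set y in T | e x y]|.

Fixpoint valid_run (V : finType) (e : rel V) (T : {set V}) (s : seq V) : bool :=
  match s with
  | [::] => true
  | x :: s' => [&& x \notin T, 2 <= nbrs_in e T x & valid_run e (x |: T) s']
  end.

(* Δ is dense with respect to T0: the procedure can end with T = V(Δ).
   (The procedure is monotone, so every maximal run ends in the same set.) *)
Definition dense (V : finType) (e : rel V) (T0 : {set V}) : Prop :=
  exists s : seq V, valid_run e T0 s /\ T0 :|: [set x in s] = [set: V].

Definition double_cover (V : finType) (e : rel V) : rel (V * bool) :=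
  fun p q => e p.1 q.1 && (p.2 != q.2).

From mathcomp Require Import all_boot.
Set Implicit Arguments. Unset Strict Implicit. Unset Printing Implicit Defensive.

(* Replay a run x_1, ..., x_k of the density procedure on the double cover as
   (x_1,0), (x_1,1), ..., (x_k,0), (x_k,1).  A neighbour y of x in T gives the
   neighbour (y, ~~ i) of (x, i) in T x {0,1}, so each copy of x_j has at least
   as many neighbours in the current set as x_j had.  The graph need not be
   simple for this. *)

Lemma nbrs_in_subset (V : finType) (e : rel V) (A B : {set V}) (x : V) :
  A \subset B -> nbrs_in e A x <= nbrs_in e B x.
Proof.
move=> sAB; apply: subset_leq_card; apply/subsetP=> y; rewrite !inE.
by case/andP=> /(subsetP sAB) -> ->.
Qed.

Lemma nbrs_in_double_cover (V : finType) (e : rel V) (T : {set V}) x b :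
  nbrs_in e T x <= nbrs_in (double_cover e) (setX T [set: bool]) (x, b).
Proof.
have flip_inj : injective (fun y : V => (y, ~~ b)) by move=> y z [].
rewrite /nbrs_in -(card_imset _ flip_inj); apply: subset_leq_card.
apply/subsetP=> q /imsetP[y]; rewrite !inE => /andP[yT exy] ->.
by rewrite /double_cover /= yT exy; case: (b).
Qed.

Definition double_seq (V : Type) (s : seq V) : seq (V * bool) :=
  flatten [seq [:: (x, false); (x, true)] | x <- s].

Lemma mem_double_seq (V : eqType) (s : seq V) (y : V) (c : bool) :
  ((y, c) \in double_seq s) = (y \in s).
Proof.
elim: s => [|x s IH] //=; rewrite mem_cat IH !inE !xpair_eqE.
by case: (c); rewrite ?andbT ?andbF ?orbF.
Qed.

Lemma setX_setU1_bool (V : finType) (T : {set V}) (x : V) :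
  (x, true) |: ((x, false) |: setX T [set: bool]) = setX (x |: T) [set: bool].
Proof.
apply/setP=> [[y c]]; rewrite !inE !xpair_eqE /= !andbT.
by case: c; rewrite ?andbT ?andbF ?orbF ?orbb.
Qed.

Lemma valid_run_double_cover (V : finType) (e : rel V) (T : {set V}) (s : seq V) :
  valid_run e T s -> valid_run (double_cover e) (setX T [set: bool]) (double_seq s).
Proof.
elim: s T => [|x s IH] T //= /and3P[xT x_nbrs run_s].
rewrite setX_setU1_bool IH // !inE !xpair_eqE (negbTE xT) /= andbT orbF.
rewrite (leq_trans x_nbrs (nbrs_in_double_cover _ _ _ _)) andbF /=.
apply: (leq_trans x_nbrs); apply: (leq_trans (nbrs_in_double_cover e T x true)).
exact/nbrs_in_subset/subsetUr.
Qed.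

Theorem lemma3p6 (V : finType) (e : rel V) (S0 : {set V}) :
  simple_graph e -> dense e S0 ->
  dense (double_cover e) (setX S0 [set: bool]).
Proof.
move=> _ [s [run_s cover_s]]; exists (double_seq s).
split; first exact: valid_run_double_cover.
apply/setP=> [[y c]]; rewrite !inE mem_double_seq andbT.
by have := in_setT y; rewrite -cover_s !inE.
Qed.
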